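(* Let $k,s$ be integers with $k\geq 3$ and $s\geq 3$. Then: (1) If $3\leq k\leq \binom{s-1}{\lceil (s-1)/2\rceil}+1$, then $\mathrm{GR}_{k}(\mathcal{C}_3:\mathcal{C}_s)=s$. (2) If $k>\binom{s-1}{\lceil (s-1)/2\rceil}+1$, then the pair $(\mathcal{C}_3,\mathcal{C}_s)$ is $(\mathcal{C}_3:\mathcal{C}_s)_k$-good.
   Context: $\mathcal{B}_N$ denotes the Boolean lattice of all subsets of $[N]=\{1,\dots,N\}$ ordered by inclusion. For posets $\mathcal{P},\mathcal{Q}$, an induced copy of $\mathcal{P}$ in $\mathcal{Q}$ is the image of an injection $f:\mathcal{P}\to\mathcal{Q}$ with $f(X)\le f(Y)$ iff $X\le Y$. $\mathcal{C}_t$ is the $t$-element chain. A coloring of $\mathcal{B}_N$ is an assignment of colors to its sets; a $k$-coloring is exact if it uses colors from $[k]$ and every color in $[k]$ is used at least once. A colored subfamily is monochromatic if all its sets have the same color and rainbow if all its sets have pairwise distinct colors. The pair $(\mathcal{Q},\mathcal{P})$ is $(\mathcal{Q}:\mathcal{P})_k$-good if for every positive integer $N$, every exact $k$-coloring of $\mathcal{B}_N$ contains a rainbow induced copy of $\mathcal{Q}$ or a monochromatic induced copy of $\mathcal{P}$. For a pair that is not $(\mathcal{Q}:\mathcal{P})_k$-good, the Boolean Gallai–Ramsey number $\mathrm{GR}_k(\mathcal{Q}:\mathcal{P})$ is the smallest integer $n$ such that for every $N\ge n$, every exact $k$-coloring of $\mathcal{B}_N$ contains a rainbow induced copy of $\mathcal{Q}$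 or a monochromatic induced copy of $\mathcal{P}$. *)

From mathcomp Require Import all_boot.
Set Implicit Arguments. Unset Strict Implicit. Unset Printing Implicit Defensive.

(* Boolean lattice B_N = {set 'I_N} ordered by \subset.
   Chain C_t = 'I_t ordered by <=. *)

Definition induced_chain (N t : nat) (f : 'I_t -> {set 'I_N}) : Prop :=
  injective f /\ forall i j : 'I_t, (f i \subset f j) = (i <= j).

Definition exact_coloring (N k : nat) (c : {set 'I_N} -> nat) : Prop :=
  (forall A, 1 <= c A <= k) /\
  (forall i, 1 <= i <= k -> exists A, c A = i).

Definition has_rainbow_chain (N t : nat) (c : {set 'I_N} -> nat) : Prop :=
  exists f : 'I_t -> {set 'I_N},
    @induced_chain N t f /\ forall i j : 'I_t, c (f i) = c (f j) -> i = j.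

Definition has_mono_chain (N t : nat) (c : {set 'I_N} -> nat) : Prop :=
  exists f : 'I_t -> {set 'I_N},
    @induced_chain N t f /\ forall i j : 'I_t, c (f i) = c (f j).

Definition GR_prop (k q p N : nat) : Prop :=
  forall c : {set 'I_N} -> nat, @exact_coloring N k c ->
    @has_rainbow_chain N q c \/ @has_mono_chain N p c.

Definition GR_good (k q p : nat) : Prop := forall N, 0 < N -> GR_prop k q p N.

Definition GR_is (k q p n : nat) : Prop :=
  ~ GR_good k q p /\
  (forall N, n <= N -> GR_prop k q p N) /\
  (forall m, (forall N, m <= N -> GR_prop k q p N) -> n <= m).

From mathcomp Require Import all_boot zify.
From Stdlib Require Import Classical_Prop.
Set Implicit Arguments. Unset Strict Implicit. Unset Printing Implicit Defensive.

(* Let [a] be the colour of the empty set. Without a rainbow 3-chain, two comparable sets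
   whose colours differ from [a] have the same colour, since otherwise together with the
   empty set they form a rainbow chain. So one set of each colour other than [a] gives an
   antichain of size [k - 1], and Sperner's theorem bounds [k - 1] by ['C(N, N./2)]; this
   settles [N < s]. For [N >= s], take sets [X], [Y] of two distinct colours other than [a]
   with [|X Δ Y|] minimal: on a maximal chain through [X ∩ Y], [X], [X ∪ Y] every set but [X]
   has colour [a], which leaves a monochromatic chain of [N] sets. The bound [GR >= s]
   comes from colouring the middle layer of [B_(s-1)] with colours [2..k] and all other
   sets with [1]: two comparable sets never both lie in the layer, and a monochromatic
   chain of [s] sets is a maximal chain, so it meets both the empty set and the layer. *)

Lemma leq_bin_half n a : 'C(n, a) <= 'C(n, n./2).
Proof.
have n_half := odd_double_half n; rewrite -mul2n in n_half.
have mono : {in [pred i | i <= n./2] &, {homo binomial n : i j / i <= j}}.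
  apply: homo_leq_in => [//||i j _|i _].
  - exact: leq_trans.
  - by rewrite !inE => le_j l /andP[_ lt_lj]; apply: leq_trans (ltnW lt_lj) le_j.
  - rewrite inE => le_i; rewrite -(@leq_pmul2l i.+1) // mul_bin_left leq_mul2r; lia.
have [le_a|lt_a] := leqP a n./2; first by apply: mono; rewrite ?inE.
have [le_an|lt_na] := leqP a n; last by rewrite bin_small.
rewrite -bin_sub //; apply: mono; rewrite ?inE //; lia.
Qed.

Lemma bin_uphalf n : 'C(n, uphalf n) = 'C(n, n./2).
Proof.
have n_half := odd_double_half n; rewrite -mul2n in n_half.
have uphalfE := uphalf_half n.
rewrite -bin_sub; last by lia.
by congr binomial; lia.
Qed.

Lemma leq_bin_central m n : m <= n -> 'C(m, m./2) <= 'C(n, n./2).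
Proof. by move=> le_mn; apply: leq_trans (leq_bin2l _ le_mn) (leq_bin_half _ _). Qed.

Section Sperner.
Variable T : finType.

Definition antichain (F : {set {set T}}) :=
  {in F &, forall A B : {set T}, A \subset B -> A = B}.

Lemma antichain_top (D : {set T}) (F : {set {set T}}) :
  antichain F -> F \subset powerset D -> D \in F -> F = [set D].
Proof.
move=> antiF sFD DF; apply/setP => A; rewrite inE.
apply/idP/eqP => [AF|->//]; apply: antiF => //.
by rewrite -powersetE (subsetP sFD).
Qed.

(* The LYM inequality: [#|A|`! * (#|D| - #|A|)`!] counts the maximal chains of subsets
   of [D] through [A], and no maximal chain meets an antichain twice. *)
Lemma lym (n : nat) (D : {set T}) (F : {set {set T}}) :
  #|D| = n -> F \subset powerset D -> antichain F ->
  \sum_(A in F) #|A|`! * (n - #|A|)`! <= n`!.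
Proof.
elim: n D F => [|n IH] D F Dn sFD antiF;
  have [DF|DnF] := boolP (D \in F);
  try by rewrite (antichain_top antiF sFD DF) big_set1 Dn subnn muln1.
- rewrite big_pred0 // => A; apply/negbTE; apply: contraNN DnF => AF.
  have sAD : A \subset D by rewrite -powersetE (subsetP sFD).
  by have /eqP <- : A == D by rewrite eqEcard sAD Dn.
have ltAD : forall A, A \in F -> A \proper D.
  move=> A AF; rewrite properEneq -powersetE (subsetP sFD) // andbT.
  by apply: contraNneq DnF => <-.
have splitA : forall A, A \in F ->
    #|A|`! * (n.+1 - #|A|)`! = \sum_(e in D :\: A) #|A|`! * (n - #|A|)`!.
  move=> A AF; have := proper_card (ltAD A AF); rewrite Dn ltnS => leAn.
  rewrite sum_nat_const cardsD (setIidPr (proper_sub (ltAD A AF))) Dn.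
  by rewrite subSn // factS mulnCA.
rewrite (eq_bigr _ splitA) (exchange_big_dep (mem D)) /=; last first.
  by move=> A e _; rewrite inE => /andP[].
apply: (@leq_trans (\sum_(e in D) n`!)); last by rewrite sum_nat_const Dn factS.
apply: leq_sum => e De.
rewrite (eq_bigl (mem [set A in F | e \notin A])) => [|A]; last first.
  by rewrite !inE De andbT andbC.
apply: (IH (D :\ e)).
- by move: Dn; rewrite (cardsD1 e) De add1n => -[].
- apply/subsetP => A; rewrite !inE => /andP[AF eA].
  by rewrite subsetD1 eA -powersetE (subsetP sFD).
- by move=> A B /[!inE] /andP[AF _] /andP[BF _]; apply: antiF.
Qed.

Theorem sperner (F : {set {set T}}) : antichain F -> #|F| <= 'C(#|T|, #|T|./2).
Proof.
move=> antiF; set n := #|T|; set h := n./2.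
have le_hn : h <= n by rewrite /h -divn2 leq_div.
have w_gt0 : 0 < h`! * (n - h)`! by rewrite muln_gt0 !fact_gt0.
have w_min : forall a, a <= n -> h`! * (n - h)`! <= a`! * (n - a)`!.
  move=> a le_an; rewrite -(@leq_pmul2l 'C(n, a)) ?bin_gt0 //.
  apply: (@leq_trans ('C(n, h) * (h`! * (n - h)`!))).
    by rewrite leq_mul2r leq_bin_half orbT.
  by rewrite !bin_fact.
rewrite -(leq_pmul2r w_gt0) bin_fact //.
apply: (@leq_trans (\sum_(A in F) #|A|`! * (n - #|A|)`!)).
  by rewrite -sum_nat_const; apply: leq_sum => A _; apply: w_min; apply: max_card.
apply: (lym (D := setT)) antiF; first exact: cardsT.
by apply/subsetP => A _; rewrite powersetE subsetT.
Qed.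

End Sperner.

Section MaximalChains.
Variable T : finType.

Lemma extend_uniq_seq (s : seq T) (B : {set T}) : uniq s -> [set x in s] \subset B ->
  exists t, uniq (s ++ t) /\ [set x in s ++ t] = B.
Proof.
move=> s_uniq sB; exists (enum (B :\: [set x in s])); split.
  rewrite cat_uniq s_uniq enum_uniq andbT /=.
  by apply/hasPn => x; rewrite mem_enum !inE => /andP[].
apply/setP => x; rewrite !inE mem_cat mem_enum !inE.
by case: (boolP (x \in s)) => //= xs; rewrite (subsetP sB) // inE.
Qed.

Lemma set_take_card (s1 s2 : seq T) :
  uniq (s1 ++ s2) -> [set x in take #|[set x in s1]| (s1 ++ s2)] = [set x in s1].
Proof.
by rewrite cat_uniq => /and3P[/card_uniqP s1_size _ _]; rewrite cardsE s1_size take_size_cat.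
Qed.

(* The chain of prefixes of an enumeration of [T] listing [Z], then [X], then [W]. *)
Lemma maximal_chain_through (Z X W : {set T}) : Z \subset X -> X \subset W ->
  exists C : nat -> {set T},
    [/\ {homo C : i j / i <= j >-> i \subset j}, forall i, #|C i| = minn i #|T|,
        C #|Z| = Z, C #|X| = X & C #|W| = W].
Proof.
move=> sZX sXW.
have [sZ [uZ eZ]] : exists s, uniq s /\ [set x in s] = Z.
  by apply: (@extend_uniq_seq [::]); rewrite ?set_nil ?sub0set.
have [tX [uX eX]] : exists t, uniq (sZ ++ t) /\ [set x in sZ ++ t] = X.
  by apply: extend_uniq_seq; rewrite ?eZ.
have [tW [uW eW]] : exists t, uniq ((sZ ++ tX) ++ t) /\ [set x in (sZ ++ tX) ++ t] = W.
  by apply: extend_uniq_seq; rewrite ?eX.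
have [tT [uT eT]] := extend_uniq_seq uW (subsetT _).
exists (fun i => [set x in take i (((sZ ++ tX) ++ tW) ++ tT)]); split.
- move=> i j le_ij; apply/subsetP => x; rewrite !inE -(take_takel _ le_ij).
  exact: mem_take.
- move=> i; rewrite cardsE (card_uniqP (take_uniq _ uT)) size_take_min.
  by rewrite -(card_uniqP uT) -cardsE eT cardsT.
- by rewrite -eZ -!catA set_take_card ?catA.
- by rewrite -eX -catA set_take_card ?catA.
- by rewrite -eW set_take_card.
Qed.

End MaximalChains.

Section InducedChains.
Variables N t : nat.
Implicit Type f : 'I_t -> {set 'I_N}.

Lemma induced_chain_proper f :
  induced_chain f -> forall i j : 'I_t, i < j -> f i \proper f j.
Proof.
move=> [f_inj f_sub] i j lt_ij; rewrite properEneq f_sub (ltnW lt_ij) andbT.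
by apply: contraTneq lt_ij => /f_inj ->; rewrite ltnn.
Qed.

Lemma induced_chain_of_proper f :
  (forall i j : 'I_t, i < j -> f i \proper f j) -> induced_chain f.
Proof.
move=> f_proper; split=> [i j eq_f|i j].
  by case: (ltngtP i j) => [/f_proper|/f_proper|/val_inj //]; rewrite eq_f properxx.
case: (ltngtP i j) => [lt_ij|lt_ji|/val_inj ->]; last by rewrite !subxx.
  by rewrite (proper_sub (f_proper _ _ lt_ij)).
by move: (f_proper _ _ lt_ji); rewrite properE => /andP[_ /negbTE].
Qed.

End InducedChains.

Lemma full_induced_chain_meets_levels N (f : 'I_N.+1 -> {set 'I_N}) :
  induced_chain f -> forall m, m <= N -> exists i, #|f i| = m.
Proof.
move=> f_chain m le_mN.
have card_f i : #|f i| < N.+1 by rewrite ltnS -[N in _ <= N]card_ord max_card.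
pose g i : 'I_N.+1 := Ordinal (card_f i).
have g_inj : injective g.
  move=> i j /(congr1 val) /= eq_card.
  have card_lt (k l : 'I_N.+1) : k < l -> #|f k| < #|f l|.
    by move=> /(induced_chain_proper f_chain) /proper_card.
  case: (ltngtP i j) => [/card_lt|/card_lt|/val_inj //]; by rewrite eq_card ltnn.
have lt_mN : m < N.+1 by [].
have /codomP [i /(congr1 val) /= ->] := inj_card_onto g_inj (leqnn _) (Ordinal lt_mN).
by exists i.
Qed.

Definition symdiff (T : finType) (A B : {set T}) := (A :\: B) :|: (B :\: A).

Lemma symdiff_proper (T : finType) (X Y D : {set T}) :
  X :&: Y \subset D -> D \subset X :|: Y -> D != X -> symdiff D Y \proper symdiff X Y.
Proof.
move=> sID sDU neDX.
have D_between x : ((x \in X) && (x \in Y) ==> (x \in D)) && ((x \in D) ==> (x \in X) || (x \in Y)).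
  rewrite -in_setI -in_setU.
  by apply/andP; split; apply/implyP; [apply: (subsetP sID) | apply: (subsetP sDU)].
rewrite properE; apply/andP; split.
  apply/subsetP => x; move: (D_between x); rewrite !inE.
  by case: (x \in X); case: (x \in Y); case: (x \in D).
move: neDX; rewrite eqEsubset negb_and => /orP[] /subsetPn [x x1 x2];
  apply/subsetPn; exists x; move: x1 x2 (D_between x); rewrite !inE;
  by case: (x \in X); case: (x \in Y); case: (x \in D).
Qed.

Section RainbowFreeColorings.
Variables N k : nat.
Variable c : {set 'I_N} -> nat.

Lemma rainbow3_of_proper (A B D : {set 'I_N}) : A \proper B -> B \proper D ->
  c A != c B -> c B != c D -> c A != c D -> has_rainbow_chain 3 c.
Proof.
move=> ltAB ltBD neAB neBD neAD.
exists (fun i : 'I_3 => nth set0 [:: A; B; D] i); split.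
  apply: induced_chain_of_proper => -[[|[|[|?]]] ?] [[|[|[|?]]] ?] //= _.
  exact: proper_trans ltBD.
move=> [[|[|[|?]]] ?] [[|[|[|?]]] ?] //=; try by move=> _; apply: val_inj.
all: by move=> e; move: neAB neBD neAD; rewrite e eqxx.
Qed.

Hypothesis rainbow_free : ~ has_rainbow_chain 3 c.

Lemma color_eq_of_subset (A B : {set 'I_N}) :
  A \subset B -> c A != c set0 -> c B != c set0 -> c A = c B.
Proof.
move=> sAB cA cB; have [->//|neAB] := eqVneq A B.
apply/eqP/negPn/negP => neC; apply: rainbow_free.
apply: (@rainbow3_of_proper set0 A B); rewrite ?(eq_sym (c set0)) //.
  by rewrite proper0; apply: contraNneq cA => ->.
by rewrite properEneq neAB.
Qed.

(* Being comparable with [X], such a [D] has the colour of [X]; below [X :&: Y] or above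
   [X :|: Y] it would also have the colour of [Y], and in between it could replace [X] with
   a smaller symmetric difference. *)
Lemma minimal_pair_rigid (X Y D : {set 'I_N}) :
  c X != c set0 -> c Y != c set0 -> c X != c Y ->
  (forall D, c D != c set0 -> c D != c Y -> #|symdiff X Y| <= #|symdiff D Y|) ->
  c D != c set0 -> (D \subset X) || (X \subset D) ->
  (D \subset X :&: Y) || (X :&: Y \subset D) ->
  (D \subset X :|: Y) || (X :|: Y \subset D) -> D = X.
Proof.
move=> cX cY neXY X_min cD cmpX cmpI cmpU.
have eq_DX : c D = c X.
  by case/orP: cmpX => [sDX|sXD]; [|symmetry]; apply: color_eq_of_subset.
have incmpY : ~~ ((D \subset Y) || (Y \subset D)).
  apply/negP => /orP[sDY|sYD]; move: neXY; rewrite -eq_DX.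
    by rewrite (color_eq_of_subset sDY) ?eqxx.
  by rewrite (color_eq_of_subset sYD) ?eqxx.
case/orP: cmpI => [sDI|sID].
  by move: incmpY; rewrite (subset_trans sDI (subsetIr X Y)).
case/orP: cmpU => [sDU|sUD]; last first.
  by move: incmpY; rewrite (subset_trans (subsetUr X Y) sUD) orbT.
apply/eqP; apply: contraT => neDX.
have := X_min D cD; rewrite eq_DX => /(_ neXY).
by rewrite leqNgt (proper_card (symdiff_proper sID sDU neDX)).
Qed.

Hypothesis exact_c : exact_coloring k c.

Lemma exact_coloring_antichain_bound : k.-1 <= 'C(N, N./2).
Proof.
have [_ c_onto] := exact_c.
pose rep i := odflt set0 [pick A | c A == i].
have c_rep (i : 'I_k) : c (rep i.+1) = i.+1.
  rewrite /rep; case: pickP => [A /eqP //|no_A].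
  have [A cA] := c_onto i.+1 (ltn_ord i).
  by move: (no_A A); rewrite cA eqxx.
pose I := [set i : 'I_k | i.+1 != c set0].
have card_I : k.-1 <= #|I|.
  have : #|~: I| <= 1.
    apply/card_le1_eqP => i j; rewrite !inE !negbK => /eqP ei /eqP ej.
    by apply/val_inj/succn_inj; rewrite ei ej.
  by have := cardsC I; rewrite card_ord; lia.
pose F := [set rep i.+1 | i : 'I_k in I].
have card_F : #|F| = #|I|.
  apply: card_in_imset => i j _ _ eq_rep; apply/val_inj/succn_inj.
  by rewrite -(c_rep i) -(c_rep j) eq_rep.
have antiF : antichain F.
  move=> _ _ /imsetP[i Ii ->] /imsetP[j Ij ->] sub_ij.
  move: Ii Ij; rewrite !inE -(c_rep i) -(c_rep j) => ci cj.
  by have := color_eq_of_subset sub_ij ci cj; rewrite !c_rep => -[->].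
by have := sperner antiF; rewrite card_ord card_F; apply: leq_trans.
Qed.

Hypothesis k_ge3 : 3 <= k.

Lemma two_colors_avoiding a : exists X Y, [&& c X != a, c Y != a & c X != c Y].
Proof.
have [_ c_onto] := exact_c.
have [A1 c1] := c_onto 1 ltac:(lia).
have [A2 c2] := c_onto 2 ltac:(lia).
have [A3 c3] := c_onto 3 ltac:(lia).
have [a1|a1] := eqVneq a 1; first by exists A2, A3; rewrite c2 c3 a1.
have [a2|a2] := eqVneq a 2; first by exists A1, A3; rewrite c1 c3 a2.
by exists A1, A2; rewrite c1 c2 eq_sym a1 eq_sym a2.
Qed.

Lemma mono_chain_of_large s : s <= N -> has_mono_chain s c.
Proof.
move=> le_sN.
have [X0 [Y /and3P[cX0 cY neX0Y]]] := two_colors_avoiding (c set0).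
pose P X := (c X != c set0) && (c X != c Y).
have P_X0 : P X0 by apply/andP.
case: (@arg_minnP _ X0 P (fun X => #|symdiff X Y|) P_X0) => X /andP[cX neXY] X_min.
have [C [C_mono C_card C_I C_X C_U]] := maximal_chain_through (subsetIl X Y) (subsetUl X Y).
rewrite card_ord in C_card.
have C_cmp i j : (C i \subset C j) || (C j \subset C i).
  by case/orP: (leq_total i j) => /C_mono ->; rewrite ?orbT.
have C_background j : j <= N -> j != #|X| -> c (C j) = c set0.
  move=> le_jN; apply: contraNeq => cCj.
  have <- : C j = X.
    apply: minimal_pair_rigid cX cY neXY _ cCj _ _ _.
    - by move=> D cD neDY; apply: X_min; apply/andP.
    - by rewrite -C_X C_cmp.
    - by rewrite -C_I C_cmp.
    - by rewrite -C_U C_cmp.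
  by rewrite C_card (minn_idPl le_jN).
have bump_le (i : 'I_s) : bump #|X| i <= N.
  by have := ltn_ord i; rewrite /bump; case: (#|X| <= i) => /=; lia.
exists (fun i : 'I_s => C (bump #|X| i)); split.
  apply: induced_chain_of_proper => i j lt_ij.
  rewrite properEcard C_mono ?leq_bump2 ?(ltnW lt_ij) // !C_card !(minn_idPl (bump_le _)).
  by rewrite ltnNge leq_bump2 -ltnNge.
by move=> i j; rewrite !C_background ?bump_le // eq_sym neq_bump.
Qed.

End RainbowFreeColorings.

Section LayerColoring.
Variables N m k : nat.
Hypotheses (m_gt0 : 0 < m) (k_ge2 : 2 <= k) (k_le : k <= 'C(N, m) + 1).

Definition layer_coloring (A : {set 'I_N}) : nat :=
  if #|A| == m then (minn (index A (enum [set B : {set 'I_N} | #|B| == m])) (k - 2)).+2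
  else 1.

Lemma layer_coloring_exact : exact_coloring k layer_coloring.
Proof.
split=> [A|i /andP[i_gt0 le_ik]]; first by rewrite /layer_coloring; case: ifP => _; lia.
have [->|ne_i1] := eqVneq i 1.
  by exists set0; rewrite /layer_coloring cards0 eq_sym (negbTE (lt0n_neq0 m_gt0)).
set e := enum [set B : {set 'I_N} | #|B| == m].
have lt_i : i - 2 < size e by rewrite -cardE card_draws card_ord; lia.
exists (nth set0 e (i - 2)).
have := mem_nth set0 lt_i; rewrite mem_enum inE => /eqP card_nth.
by rewrite /layer_coloring card_nth eqxx index_uniq ?enum_uniq //; lia.
Qed.

Lemma layer_coloring_proper (A B : {set 'I_N}) :
  A \proper B -> layer_coloring A = 1 \/ layer_coloring B = 1.
Proof.
move=> /proper_card lt_AB; rewrite /layer_coloring.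
case: eqP => [cardA|_]; case: eqP => [cardB|_]; auto.
by rewrite cardA cardB ltnn in lt_AB.
Qed.

Lemma layer_coloring_no_rainbow3 : ~ has_rainbow_chain 3 layer_coloring.
Proof.
move=> [f [f_chain f_rainbow]].
have one (i j : 'I_3) : i < j -> layer_coloring (f i) = 1 \/ layer_coloring (f j) = 1.
  by move=> /(induced_chain_proper f_chain) /layer_coloring_proper.
have distinct (i j : 'I_3) : i != j -> layer_coloring (f i) <> layer_coloring (f j).
  by move=> /eqP ne_ij /f_rainbow.
pose i0 := @Ordinal 3 0 isT; pose i1 := @Ordinal 3 1 isT; pose i2 := @Ordinal 3 2 isT.
have := one i0 i1 isT; have := one i1 i2 isT; have := one i0 i2 isT.
have := distinct i0 i1 isT; have := distinct i1 i2 isT; have := distinct i0 i2 isT.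
lia.
Qed.

Lemma layer_coloring_no_full_mono : ~ has_mono_chain N.+1 layer_coloring.
Proof.
move=> [f [f_chain f_mono]].
have le_mN : m <= N by rewrite -(bin_gt0 N); lia.
have [i0 card_i0] := full_induced_chain_meets_levels f_chain (leq0n N).
have [im card_im] := full_induced_chain_meets_levels f_chain le_mN.
have := f_mono i0 im; rewrite /layer_coloring card_i0 card_im eqxx.
by rewrite eq_sym (negbTE (lt0n_neq0 m_gt0)).
Qed.

Lemma not_GR_prop_layer : ~ GR_prop k 3 N.+1 N.
Proof.
move=> GR; case: (GR _ layer_coloring_exact).
  exact: layer_coloring_no_rainbow3.
exact: layer_coloring_no_full_mono.
Qed.

End LayerColoring.

Lemma GR_prop_large k s N : 3 <= k -> s <= N -> GR_prop k 3 s N.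
Proof.
move=> k_ge3 le_sN c exact_c.
have [rainbow|rainbow_free] := classic (has_rainbow_chain 3 c); first by left.
by right; apply: mono_chain_of_large rainbow_free exact_c k_ge3 _ le_sN.
Qed.

Lemma GR_prop_small k s N : 'C(N, N./2) < k.-1 -> GR_prop k 3 s N.
Proof.
move=> lt_k c exact_c; left.
have [//|rainbow_free] := classic (has_rainbow_chain 3 c).
by move: lt_k; rewrite ltnNge (exact_coloring_antichain_bound rainbow_free exact_c).
Qed.

Theorem theorem1p2 (k s : nat) (hk : 3 <= k) (hs : 3 <= s) :
  (k <= 'C(s.-1, uphalf s.-1) + 1 -> GR_is k 3 s s) /\
  ('C(s.-1, uphalf s.-1) + 1 < k -> GR_good k 3 s).
Proof.
split.
  case: s hs => // N; rewrite succnK => hs hkC.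
  have notGR : ~ GR_prop k 3 N.+1 N.
    by apply: (not_GR_prop_layer _ _ hkC); [case: N hs {hkC} | lia].
  split; [|split].
  - by move=> good; apply: notGR; apply: good; lia.
  - by move=> M le_M; apply: GR_prop_large.
  - move=> M GR_M; rewrite leqNgt; apply/negP => lt_M.
    by apply: notGR; apply: GR_M; lia.
move=> hkC N _; have [le_sN|lt_Ns] := leqP s N; first exact: GR_prop_large.
apply: GR_prop_small.
have : N <= s.-1 by lia.
by move=> /leq_bin_central; rewrite -(bin_uphalf s.-1); lia.
Qed.
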